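(* Let $\mathscr D:\mathscr N=\mathscr N_1\cup\cdots\cup\mathscr N_k$ be a pairwise binary-sized decomposition of a chemical reaction network $\mathscr N$ such that at least one linkage class of $\mathscr N$ does not contain a common complex. Let $\mathscr N'$ and $\mathscr N'_i$ be the networks obtained by removing from $\mathscr N$ and $\mathscr N_i$, respectively, their $\mathscr C_{\mathscr D}$-linkage classes. Then $\mathscr D':\mathscr N'=\mathscr N'_1\cup\cdots\cup\mathscr N'_k$ is a $\mathscr C$-decomposition if $\mathscr D'$ is non-trivial.
   Context: A CRN $\mathscr N=(\mathscr S,\mathscr C,\mathscr R)$ is viewed as a directed graph on its complexes with arcs its reactions; linkage classes are the connected components of the underlying undirected graph. A decomposition $\mathscr N=\mathscr N_1\cup\cdots\cup\mathscr N_k$ is given by a partition $\{\mathscr R_1,\dots,\mathscr R_k\}$ of the reaction set; the subnetwork $\mathscr N_i$ has reactions $\mathscr R_i$ and complex set $\mathscr C_i$ the complexes occurring in reactions of $\mathscr R_i$. The length of a decomposition is the number of (nonempty) subnetworks; it is empty if the length is 0, trivial if the length is 1, and non-trivial otherwise. The set $\mathscr C_{\mathscr D}$ of common complexes consists of the complexes lying in the complex sets of at least two distinct subnetworks; $d=|\mathscr C_{\mathscr D}|$. A $\mathscr C_{\mathscr D}$-linkage class (of $\mathscr N$ or of some $\mathscr N_i$) is a linkage class containing an element of $\mathscr C_{\mathscr D}$; removing linkage classes means removing their reactions (and complexes). The decomposition is pairwise binary-sized if there are integers $0\le b\le c\le d$ with $|\mathscr C_i\cap\mathscr C_j|\in\{b,c\}$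 for all $i\ne j$. A $\mathscr C$-decomposition is a decomposition in which the complex sets of distinct subnetworks are pairwise disjoint. *)

(* A CRN is viewed as a directed graph on its complexes.
   Complexes are elements of an arbitrary finite type [T] (e.g. nonnegative
   integer vectors over the species); a network is given by its finite set of
   reactions, i.e. pairs (reactant complex, product complex). *)
From mathcomp Require Import all_boot.
Set Implicit Arguments. Unset Strict Implicit. Unset Printing Implicit Defensive.

Section CRN.
Variable T : finType.

Definition is_CRN (R : {set T * T}) : Prop := forall r, r \in R -> r.1 != r.2.

Definition complexes (R : {set T * T}) : {set T} :=
  [set y | [exists r in R, (r.1 == y) || (r.2 == y)]].

Definition und_adj (R : {set T * T}) : rel T :=
  fun x y => ((x, y) \in R) || ((y, x) \in R).

Definition linkage_classes (R : {set T * T}) : {set {set T}} :=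
  [set [set y | connect (und_adj R) x y] | x in complexes R].

Definition reactions_of (R : {set T * T}) (L : {set T}) : {set T * T} :=
  [set r in R | r.1 \in L].

Definition remove_CD_classes (R : {set T * T}) (CD : {set T}) : {set T * T} :=
  R :\: \bigcup_(L in linkage_classes R | ~~ [disjoint L & CD]) reactions_of R L.

(* a decomposition of R: a partition of the reaction set indexed by 'I_k
   (blocks may be empty; the length counts nonempty blocks) *)
Definition is_decomposition (R : {set T * T}) k (Rs : 'I_k -> {set T * T}) : Prop :=
  (\bigcup_(i < k) Rs i = R) /\ (forall i j, i != j -> [disjoint Rs i & Rs j]).

Definition dec_length k (Rs : 'I_k -> {set T * T}) : nat := #|[set i | Rs i != set0]|.

Definition nontrivial_dec k (Rs : 'I_k -> {set T * T}) : Prop := 1 < dec_length Rs.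

Definition common_complexes k (Rs : 'I_k -> {set T * T}) : {set T} :=
  [set y | 1 < #|[set i | y \in complexes (Rs i)]|].

Definition pairwise_binary_sized k (Rs : 'I_k -> {set T * T}) : Prop :=
  exists b c, b <= c <= #|common_complexes Rs| /\
    forall i j, i != j ->
      (#|complexes (Rs i) :&: complexes (Rs j)| == b) ||
      (#|complexes (Rs i) :&: complexes (Rs j)| == c).

Definition is_C_decomposition (R : {set T * T}) k (Rs : 'I_k -> {set T * T}) : Prop :=
  is_decomposition R Rs /\
  forall i j, i != j -> [disjoint complexes (Rs i) & complexes (Rs j)].

End CRN.

(* A reaction r of a subnetwork R_i survives the removal of the C_D-linkage
   classes of R_i exactly when it survives the removal of those of R: follow a
   path in R from r to a common complex; the first arc of the path that leaves
   R_i starts at a complex shared by R_i and another subnetwork, i.e. at a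
   common complex already reachable inside R_i.  Hence the reduced subnetworks
   still partition the reduced network, and a complex shared by two of them
   would be a common complex, all of which have been removed. *)
From mathcomp Require Import all_boot.
Set Implicit Arguments. Unset Strict Implicit. Unset Printing Implicit Defensive.

Section Networks.
Variable T : finType.
Implicit Types (S : {set T * T}) (CD : {set T}).

Lemma disjointP (A B : {set T}) :
  reflect (forall x, x \in A -> x \in B -> False) [disjoint A & B].
Proof.
rewrite -setI_eq0; apply: (iffP eqP) => [AB0 x xA xB | AB].
  by move/setP/(_ x): AB0; rewrite !inE xA xB.
by apply/setP => x; rewrite !inE; apply/andP => -[/AB]; apply.
Qed.

Lemma complexes_fst S r : r \in S -> r.1 \in complexes S.
Proof. by move=> rS; rewrite inE; apply/existsP; exists r; rewrite rS eqxx. Qed.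

Lemma complexes_snd S r : r \in S -> r.2 \in complexes S.
Proof. by move=> rS; rewrite inE; apply/existsP; exists r; rewrite rS eqxx orbT. Qed.

Lemma complexesP S y :
  reflect (exists2 r, r \in S & (r.1 == y) || (r.2 == y)) (y \in complexes S).
Proof.
rewrite inE; apply: (iffP existsP) => [[r /andP[]] | [r rS ry]]; first by exists r.
by exists r; apply/andP.
Qed.

Lemma complexesS S1 S2 : S1 \subset S2 -> complexes S1 \subset complexes S2.
Proof.
move=> /subsetP S12; apply/subsetP => y /complexesP[r /S12 rS2 ry].
by apply/complexesP; exists r.
Qed.

Lemma und_adj_sym S : symmetric (und_adj S).
Proof. by move=> x y; rewrite /und_adj orbC. Qed.

Lemma und_adj_complexes S x y : und_adj S x y -> x \in complexes S.
Proof. by case/orP => [/complexes_fst | /complexes_snd]. Qed.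

Lemma connect_und_adjS S1 S2 x y :
  S1 \subset S2 -> connect (und_adj S1) x y -> connect (und_adj S2) x y.
Proof.
move=> /subsetP S12; apply: connect_sub => u v /orP uv; apply: connect1.
by rewrite /und_adj; case: uv => /S12 ->; rewrite ?orbT.
Qed.

Lemma remove_CD_classesP S CD r :
  r \in remove_CD_classes S CD <->
  r \in S /\ ~ exists2 z, z \in CD & connect (und_adj S) r.1 z.
Proof.
have csym := sym_connect_sym (@und_adj_sym S).
split.
  move=> /setDP[rS /negP r_notin]; split=> // -[z zCD r1z]; apply: r_notin.
  apply/bigcupP; exists [set y | connect (und_adj S) r.1 y].
    rewrite imset_f ?complexes_fst //=.
    by apply/negP => /disjointP/(_ z); rewrite inE; apply.
  by rewrite !inE rS connect0.
move=> [rS no_z]; apply/setDP; split=> //; apply/negP => /bigcupP[L].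
case/andP => /imsetP[x _ ->] /negP meets; rewrite !inE rS /= => xr1.
apply: meets; apply/disjointP => z; rewrite inE => xz zCD.
by apply: no_z; exists z; rewrite // (connect_trans _ xz) // csym.
Qed.

Lemma remove_CD_classes_subset S CD : remove_CD_classes S CD \subset S.
Proof. exact: subsetDl. Qed.

Lemma complexes_remove_CD_classes S CD :
  [disjoint complexes (remove_CD_classes S CD) & CD].
Proof.
apply/disjointP => y /complexesP[r /remove_CD_classesP[rS no_z] ry] yCD.
apply: no_z; exists y => //; case/orP: ry => /eqP <-; first exact: connect0.
by apply: connect1; rewrite /und_adj -surjective_pairing rS.
Qed.

Lemma common_complexesP k (Rs : 'I_k -> {set T * T}) i j y :
  i != j -> y \in complexes (Rs i) -> y \in complexes (Rs j) ->
  y \in common_complexes Rs.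
Proof.
move=> ij yi yj; rewrite inE (cardD1 i) inE yi add1n ltnS lt0n.
by apply/pred0Pn; exists j; apply/andP; rewrite eq_sym inE.
Qed.

Section Decomposition.
Variables (R : {set T * T}) (k : nat) (Rs : 'I_k -> {set T * T}).
Hypothesis decR : is_decomposition R Rs.
Let CD := common_complexes Rs.

Lemma decomposition_subset i : Rs i \subset R.
Proof. by case: decR => <- _; apply: bigcup_sup. Qed.

Lemma decomposition_cover r : r \in R -> exists i, r \in Rs i.
Proof. by case: decR => <- _ /bigcupP[i _ ri]; exists i. Qed.

Lemma und_adj_decomposition x y : und_adj R x y -> exists i, und_adj (Rs i) x y.
Proof.
by case/orP => /decomposition_cover[i ri]; exists i; rewrite /und_adj ri ?orbT.
Qed.

Lemma connect_common_complex i x z :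
  x \in complexes (Rs i) -> connect (und_adj R) x z -> z \in CD ->
  exists2 w, w \in CD & connect (und_adj (Rs i)) x w.
Proof.
move=> xi /connectP[p]; elim: p x xi => [|y p IHp] x xi /=.
  by move=> _ -> xCD; exists x.
case/andP=> /und_adj_decomposition[j xy] yp z_last zCD.
have [eij | ij] := eqVneq i j; last first.
  by exists x; [apply: common_complexesP ij xi (und_adj_complexes xy) | apply: connect0].
rewrite -{}eij und_adj_sym in xy.
have [w wCD yw] := IHp y (und_adj_complexes xy) yp z_last zCD.
by exists w; rewrite // (connect_trans _ yw) // connect1 // und_adj_sym.
Qed.

Lemma remove_common_classes_cover r :
  (exists i, r \in remove_CD_classes (Rs i) CD) <-> r \in remove_CD_classes R CD.
Proof.
split.
  move=> [i /remove_CD_classesP[ri no_w]]; apply/remove_CD_classesP.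
  split=> [|[z zCD r1z]]; first exact: subsetP (decomposition_subset i) _ ri.
  exact/no_w/(connect_common_complex (complexes_fst ri) r1z).
move=> /remove_CD_classesP[rR no_z]; have [i ri] := decomposition_cover rR.
exists i; apply/remove_CD_classesP; split=> // -[z zCD r1z]; apply: no_z.
by exists z; rewrite // (connect_und_adjS (decomposition_subset i)).
Qed.

Lemma remove_common_classes_decomposition :
  is_decomposition (remove_CD_classes R CD) (fun i => remove_CD_classes (Rs i) CD).
Proof.
split.
  apply/setP => r; apply/bigcupP/idP => [[i _ ri] | /remove_common_classes_cover[i ri]].
    by apply/remove_common_classes_cover; exists i.
  by exists i.
case: decR => _ disjR i j /disjR.
exact: disjointW (remove_CD_classes_subset _ _) (remove_CD_classes_subset _ _).
Qed.

Lemma remove_common_classes_complexes_disjoint i j : i != j ->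
  [disjoint complexes (remove_CD_classes (Rs i) CD)
          & complexes (remove_CD_classes (Rs j) CD)].
Proof.
move=> ij; apply/disjointP => y yi yj.
have complexes_sub l := subsetP (complexesS (remove_CD_classes_subset (Rs l) CD)).
have yCD : y \in CD by apply: (common_complexesP ij); apply: complexes_sub.
exact: disjointP (complexes_remove_CD_classes (Rs i) CD) y yi yCD.
Qed.

End Decomposition.
End Networks.

Theorem theorem5 (T : finType) (R : {set T * T}) (k : nat) (Rs : 'I_k -> {set T * T}) :
  is_CRN R ->
  is_decomposition R Rs ->
  pairwise_binary_sized Rs ->
  (exists2 L, L \in linkage_classes R & [disjoint L & common_complexes Rs]) ->
  let CD := common_complexes Rs in
  let R' := remove_CD_classes R CD in
  let Rs' := fun i => remove_CD_classes (Rs i) CD in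
  nontrivial_dec Rs' ->
  is_C_decomposition R' Rs'.
Proof.
move=> _ decR _ _ CD R' Rs' _; split.
  exact: remove_common_classes_decomposition.
exact: remove_common_classes_complexes_disjoint.
Qed.
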